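(* The relation algebra $32_{65}$ has a representation over a set of $1024$ points; that is, $1024 \in \operatorname{Spec}(32_{65})$. In fact it has a group representation over $G=(\mathbb{Z}/2\mathbb{Z})^{10}$: there is a partition $G\setminus\{0\}=A\cup B_1\cup B_2$ with $A=\{x: 1\le |x|\le 6\}$ and $B_1\cup B_2=\{x:|x|\ge 7\}$ (where $|x|$ is the number of coordinates equal to $1$) such that $A+A=G$, $A+B_1=A+B_2=G\setminus\{0\}$, $B_1+B_1=B_2+B_2=A\cup\{0\}$, and $B_1+B_2=A$, and the map sending $1'\mapsto\{(x,x)\}$, $a\mapsto\{(x,y): x+y\in A\}$, $b\mapsto\{(x,y):x+y\in B_1\}$, $c\mapsto\{(x,y):x+y\in B_2\}$ extends to a representation of $32_{65}$ on $G$.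
   Context: $32_{65}$ is the finite integral symmetric relation algebra with atoms $1'$ (identity), $a$, $b$, $c$, all symmetric, in which a diversity cycle $xyz$ (with $x,y,z\in\{a,b,c\}$) is mandatory (i.e. $x;y\ge z$) if it involves $a$ and forbidden (i.e. $x;y\cdot z=0$) otherwise; in particular $a$ is flexible. A representation of a (simple) relation algebra over a set $U$ is an embedding into the full relation algebra $\langle \mathcal P(U\times U),\cup,{}^c,\circ,{}^{-1},\mathrm{Id}_U\rangle$. $\operatorname{Spec}(A)$ is the set of cardinals $\alpha\le\omega$ such that $A$ has a representation over a set of cardinality $\alpha$. For subsets $X,Y$ of a group, $X+Y=\{x+y:x\in X,y\in Y\}$. *)

From HB Require Import structures.
From mathcomp Require Import all_boot all_order all_algebra.
Set Implicit Arguments. Unset Strict Implicit. Unset Printing Implicit Defensive.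
Import GRing.Theory.

(** Atoms of 32_65: the identity 1' (here [e]) and the diversity atoms a, b, c. *)
Inductive atom := e | a | b | c.

Definition atom_to (x : atom) : 'I_4 :=
  match x with e => inord 0 | a => inord 1 | b => inord 2 | c => inord 3 end.
Definition atom_of (i : 'I_4) : atom :=
  match val i with 0 => e | 1 => a | 2 => b | _ => c end.
Lemma atom_toK : cancel atom_to atom_of.
Proof. by case; rewrite /atom_of /= inordK. Qed.
HB.instance Definition _ := Finite.copy atom (can_type atom_toK).

(** [cyc x y z] : the cycle xyz is mandatory, i.e. x;y >= z (atoms).
    Identity atom: e;x = x;e = x; diversity atoms are symmetric, so
    x;y >= 1' iff y = x; a diversity cycle is mandatory iff it involves a. *)
Definition cyc (x y z : atom) : bool :=
  if x == e then z == y
  else if y == e then z == x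
  else if z == e then x == y
  else [|| x == a, y == a | z == a].

Definition RA := {set atom}.
Definition ra_join (X Y : RA) : RA := X :|: Y.
Definition ra_compl (X : RA) : RA := ~: X.
Definition ra_comp (X Y : RA) : RA :=
  [set z | [exists x in X, exists y in Y, cyc x y z]].
Definition ra_conv (X : RA) : RA := X. (* all atoms are symmetric *)
Definition ra_id : RA := [set e].

Definition rel_comp (U : finType) (R S : {set U * U}) : {set U * U} :=
  [set p | [exists w, ((p.1, w) \in R) && ((w, p.2) \in S)]].
Definition rel_conv (U : finType) (R : {set U * U}) : {set U * U} :=
  [set p | (p.2, p.1) \in R].
Definition rel_id (U : finType) : {set U * U} := [set p | p.1 == p.2].

Definition is_representation (U : finType) (h : RA -> {set U * U}) : Prop :=
  injective h /\
  (forall X Y, h (ra_join X Y) = h X :|: h Y) /\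
  (forall X, h (ra_compl X) = ~: h X) /\
  (forall X Y, h (ra_comp X Y) = rel_comp (h X) (h Y)) /\
  (forall X, h (ra_conv X) = rel_conv (h X)) /\
  h ra_id = rel_id U.

Definition in_Spec_fin (n : nat) : Prop :=
  exists U : finType, #|U| = n /\ exists h : RA -> {set U * U}, is_representation h.

Definition G := 'rV['F_2]_10.
Definition wt (x : G) : nat := #|[set i | x ord0 i != 0%R]|.
Definition sumset (X Y : {set G}) : {set G} := [set (x + y)%R | x in X, y in Y].

Definition grp_img (A B1 B2 : {set G}) (z : atom) : {set G * G} :=
  match z with
  | e => [set p | p.1 == p.2]
  | a => [set p | (p.1 + p.2)%R \in A]
  | b => [set p | (p.1 + p.2)%R \in B1]
  | c => [set p | (p.1 + p.2)%R \in B2]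
  end.

(* A partition of a Boolean group G into {0} and classes A, B1, B2 yields a
   representation of 32_65 on G, sending each atom to the pairs whose sum lies in
   its class, as soon as the sumset of any two classes is the union of the classes
   that complete them to a mandatory cycle.  Relational composition becomes the
   sumset because (p, q) factors through w exactly when (p + w) + (w + q) = p + q.
   The class {0} is neutral and sumsets commute, so only the six identities
   between diversity classes have to be checked.  For G = (Z/2)^10, A the vectors
   of weight 1 to 6 and a suitable split of the 176 vectors of weight at least 7
   into B1 and B2, these identities are verified by exhaustive computation on
   bit sequences. *)

From mathcomp Require Import all_boot all_order all_algebra.
Import GRing.Theory.
Set Implicit Arguments. Unset Strict Implicit. Unset Printing Implicit Defensive.
Local Open Scope ring_scope.

Definition atom_code (x : atom) : nat :=
  match x with e => 0 | a => 1 | b => 2 | c => 3 end.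

(* The equality of [atom] inherited from ['I_4] does not compute; [atom_code] does. *)
Lemma eq_atomE (x y : atom) : (x == y) = (atom_code x == atom_code y).
Proof. by apply/eqP/eqP => [-> //|]; case: x; case: y. Qed.

Lemma cycC (x y z : atom) : cyc x y z = cyc y x z.
Proof. by case: x; case: y; case: z; rewrite /cyc !eq_atomE. Qed.

Section BooleanGroupRepresentation.

Variables (G : finZmodType) (cls : G -> atom).
Hypothesis addxx : forall g : G, g + g = 0.
Hypothesis cls_eq_e : forall g, (cls g == e) = (g == 0).

Definition atom_class (z : atom) : {set G} := [set g | cls g == z].

Hypothesis sumsetAA :
  [set u + v | u in atom_class a, v in atom_class a] = [set: G].
Hypothesis sumsetAB :
  [set u + v | u in atom_class a, v in atom_class b] = [set: G] :\ 0.
Hypothesis sumsetAC :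
  [set u + v | u in atom_class a, v in atom_class c] = [set: G] :\ 0.
Hypothesis sumsetBB :
  [set u + v | u in atom_class b, v in atom_class b] = atom_class a :|: [set 0].
Hypothesis sumsetCC :
  [set u + v | u in atom_class c, v in atom_class c] = atom_class a :|: [set 0].
Hypothesis sumsetBC :
  [set u + v | u in atom_class b, v in atom_class c] = atom_class a.

Lemma addKx (g h : G) : g + (g + h) = h.
Proof. by rewrite addrA addxx add0r. Qed.

Lemma boolean_addr_eq0 (g h : G) : (g + h == 0) = (g == h).
Proof. by apply/eqP/eqP => [gh0|->]; [rewrite -(addKx g h) gh0 addr0 | exact: addxx]. Qed.

Lemma sumsetC (X Y : {set G}) :
  [set u + v | u in X, v in Y] = [set u + v | u in Y, v in X].
Proof.
by apply/setP => g; apply/imset2P/imset2P => -[u v uX vY ->]; exists v u; rewrite // addrC.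
Qed.

Lemma sumset0 (Y : {set G}) : [set u + v | u in [set 0], v in Y] = Y.
Proof.
apply/setP => g; apply/imset2P/idP => [[u v /set1P -> vY ->]|gY]; first by rewrite add0r.
by exists 0 g; rewrite ?set11 ?add0r.
Qed.

Lemma atom_class_e : atom_class e = [set 0].
Proof. by apply/setP => g; rewrite !inE cls_eq_e. Qed.

Lemma sumset_atom_class x y :
  [set u + v | u in atom_class x, v in atom_class y] = [set g | cyc x y (cls g)].
Proof.
wlog le_xy : x y / (atom_code x <= atom_code y)%N.
  move=> wlog_xy; have [/wlog_xy //|/ltnW /wlog_xy yx] := leqP (atom_code x) (atom_code y).
  by rewrite sumsetC yx; apply/setP => g; rewrite !inE cycC.
case: x le_xy; case: y => //= _;
  rewrite ?atom_class_e ?sumset0 ?sumsetAA ?sumsetAB ?sumsetAC ?sumsetBB ?sumsetCC ?sumsetBC;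
  by apply/setP => g; rewrite !inE -?cls_eq_e; case: (cls g); rewrite /cyc !eq_atomE.
Qed.

Lemma cyc_atom_classP x y g :
  reflect (exists2 u, cls u = x & cls (g + u) = y) (cyc x y (cls g)).
Proof.
have /setP/(_ g) := sumset_atom_class x y; rewrite inE => <-.
apply: (iffP imset2P) => [[u v]|[u ux gy]].
  by rewrite !inE => /eqP ux /eqP vy ->; exists u; rewrite // addrC addKx.
by exists u (g + u); rewrite ?inE ?ux ?gy // addrCA addxx addr0.
Qed.

Lemma atom_class_surj z : exists g, cls g = z.
Proof.
have /cyc_atom_classP[u uz _] : cyc z z (cls 0).
  have /eqP -> : cls 0 == e by rewrite cls_eq_e.
  by case: z; rewrite /cyc !eq_atomE.
by exists u.
Qed.

Definition atom_rel (X : RA) : {set G * G} := [set p | cls (p.1 + p.2) \in X].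

Lemma atom_rel_inj : injective atom_rel.
Proof.
move=> X Y XY; apply/setP => z; have [g gz] := atom_class_surj z.
by have /setP/(_ (g, 0)) := XY; rewrite !inE addr0 gz.
Qed.

Lemma atom_rel_comp X Y : atom_rel (ra_comp X Y) = rel_comp (atom_rel X) (atom_rel Y).
Proof.
apply/setP => -[p q]; rewrite !inE /=; apply/existsP/existsP.
  case=> x /andP[xX /existsP[y /andP[yY /cyc_atom_classP[u ux uy]]]].
  by exists (p + u); rewrite !inE /= addKx ux xX addrAC uy.
case=> w; rewrite !inE /= => /andP[xX yY].
exists (cls (p + w)); rewrite xX; apply/existsP; exists (cls (w + q)); rewrite yY.
by apply/cyc_atom_classP; exists (p + w); rewrite // addrACA addxx add0r addrC.
Qed.

Lemma atom_rel_id : atom_rel ra_id = rel_id G.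
Proof. by apply/setP => p; rewrite !inE cls_eq_e boolean_addr_eq0. Qed.

Theorem atom_rel_representation : is_representation atom_rel.
Proof.
split; first exact: atom_rel_inj.
split; first by move=> X Y; apply/setP => p; rewrite !inE.
split; first by move=> X; apply/setP => p; rewrite !inE.
split; first exact: atom_rel_comp.
split; last exact: atom_rel_id.
by move=> X; apply/setP => p; rewrite !inE addrC.
Qed.

End BooleanGroupRepresentation.

Fixpoint all_bitseqs (n : nat) : seq bitseq :=
  if n is m.+1 then
    let S := all_bitseqs m in [seq false :: s | s <- S] ++ [seq true :: s | s <- S]
  else [:: [::]].

Lemma mem_all_bitseqs n s : (s \in all_bitseqs n) = (size s == n).
Proof.
have mem_cons_map (x y : bool) t (S : seq bitseq) :
    (x :: t \in [seq y :: s | s <- S]) = (x == y) && (t \in S).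
  case: eqP => [->|xy]; first by apply: mem_map => u v [].
  by apply/mapP => -[u _ [/xy]].
elim: n s => [|n IHn] [|x s] //=; rewrite mem_cat.
  by apply/norP; split; apply/mapP => -[].
by rewrite !mem_cons_map IHn eqSS; case: x; rewrite ?orbF.
Qed.

Definition bxor (s t : bitseq) : bitseq := [seq p.1 (+) p.2 | p <- zip s t].

Lemma F2_addr_neq0 (u v : 'F_2) : (u + v != 0) = (u != 0) (+) (v != 0).
Proof. by case: u => [[|[|?]] //] ?; case: v => [[|[|?]] //] ?. Qed.

Section BinaryVectors.

Variable n : nat.
Implicit Types (x y : 'rV['F_2]_n) (s t : bitseq).

Lemma addvv x : x + x = 0.
Proof. by rewrite -mulr2n -scaler_nat pchar_Fp_0 ?scale0r. Qed.

Definition bits x : bitseq := [seq x ord0 i != 0 | i <- enum 'I_n].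

Definition row_of_bits s : 'rV['F_2]_n := \row_i (nth false s i)%:R.

Lemma size_bits x : size (bits x) = n.
Proof. by rewrite size_map size_enum_ord. Qed.

Lemma bits_in_all_bitseqs x : bits x \in all_bitseqs n.
Proof. by rewrite mem_all_bitseqs size_bits. Qed.

Lemma bits_row s : size s = n -> bits (row_of_bits s) = s.
Proof.
move=> s_n; apply: (@eq_from_nth _ false); rewrite size_bits // => i lt_i_n.
rewrite /bits (nth_map (Ordinal lt_i_n)) ?size_enum_ord // mxE nth_enum_ord //.
by case: (nth false s i); rewrite ?oner_neq0 ?eqxx.
Qed.

Lemma bits_add x y : bits (x + y) = bxor (bits x) (bits y).
Proof.
by rewrite /bxor zip_map -map_comp; apply: eq_map => i; rewrite /= mxE F2_addr_neq0.
Qed.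

Lemma count_bits_eq0 x : (count id (bits x) == 0)%N = (x == 0).
Proof.
rewrite -leqn0 leqNgt -has_count has_map.
apply/hasPn/eqP => [x0|-> i _]; last by rewrite /= mxE eqxx.
apply/rowP => i; rewrite mxE; apply/eqP; rewrite -[_ == _]negbK.
exact: x0 (mem_enum _ i).
Qed.

(* [find] rather than [has]: [vm_compute] evaluates arguments eagerly, so only
   the [if] inside [find] stops the search at the first witness. *)
Lemma sumset_bits (X Y Z : {set 'rV['F_2]_n}) (P Q R : pred bitseq) :
  (forall x, (x \in X) = P (bits x)) -> (forall y, (y \in Y) = Q (bits y)) ->
  (forall z, (z \in Z) = R (bits z)) ->
  (let Xs := [seq t <- all_bitseqs n | P t] in
   all (fun s => R s == (find (fun t => Q (bxor s t)) Xs < size Xs)%N) (all_bitseqs n)) ->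
  [set u + v | u in X, v in Y] = Z.
Proof.
move=> memX memY memZ /allP bits_check; apply/setP => z; rewrite memZ.
have /eqP -> := bits_check _ (bits_in_all_bitseqs z); rewrite -has_find.
apply/imset2P/hasP => [[u v uX vY ->]|[t]].
  exists (bits u); first by rewrite mem_filter -memX uX bits_in_all_bitseqs.
  by rewrite -bits_add addrAC addvv add0r -memY.
rewrite mem_filter mem_all_bitseqs => /andP[Pt /eqP t_n] Qzt.
exists (row_of_bits t) (z + row_of_bits t); rewrite ?memX ?memY ?bits_add ?bits_row //.
by rewrite addrCA addvv addr0.
Qed.

End BinaryVectors.

(* A vector of weight at least 7 has at most three zero coordinates; B2 is given
   by the list of these zero sets. *)
Definition B2_zero_sets : seq (seq nat) :=
  [:: [::]; [:: 3]; [:: 4]; [:: 0; 2]; [:: 0; 5]; [:: 0; 6]; [:: 0; 8];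
      [:: 1; 2]; [:: 1; 4]; [:: 1; 7]; [:: 1; 8]; [:: 1; 9]; [:: 2; 3];
      [:: 2; 6]; [:: 2; 7]; [:: 3; 4]; [:: 3; 6]; [:: 3; 9]; [:: 4; 5];
      [:: 4; 6]; [:: 4; 9]; [:: 5; 7]; [:: 5; 8]; [:: 5; 9]; [:: 6; 7];
      [:: 7; 8]; [:: 0; 1; 4]; [:: 0; 1; 5]; [:: 0; 1; 6]; [:: 0; 1; 9];
      [:: 0; 2; 4]; [:: 0; 2; 5]; [:: 0; 2; 6]; [:: 0; 2; 7]; [:: 0; 3; 5];
      [:: 0; 3; 7]; [:: 0; 3; 8]; [:: 0; 4; 6]; [:: 0; 4; 9]; [:: 0; 5; 9];
      [:: 0; 7; 8]; [:: 0; 7; 9]; [:: 1; 2; 4]; [:: 1; 2; 7]; [:: 1; 2; 9];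
      [:: 1; 3; 6]; [:: 1; 3; 7]; [:: 1; 3; 8]; [:: 1; 4; 5]; [:: 1; 4; 7];
      [:: 1; 5; 6]; [:: 1; 5; 8]; [:: 1; 6; 8]; [:: 1; 6; 9]; [:: 2; 3; 5];
      [:: 2; 3; 7]; [:: 2; 3; 9]; [:: 2; 4; 5]; [:: 2; 4; 6]; [:: 2; 4; 8];
      [:: 2; 5; 8]; [:: 2; 6; 8]; [:: 2; 7; 8]; [:: 2; 7; 9]; [:: 2; 8; 9];
      [:: 3; 4; 5]; [:: 3; 4; 6]; [:: 3; 4; 8]; [:: 3; 5; 7]; [:: 3; 5; 9];
      [:: 3; 6; 8]; [:: 3; 6; 9]; [:: 3; 7; 8]; [:: 3; 8; 9]; [:: 4; 5; 6];
      [:: 4; 5; 7]; [:: 4; 6; 9]; [:: 4; 7; 8]; [:: 4; 8; 9]; [:: 5; 6; 9];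
      [:: 5; 8; 9]; [:: 6; 7; 8]; [:: 6; 7; 9]].

Definition zero_coords (s : bitseq) : seq nat :=
  [seq i <- iota 0 (size s) | ~~ nth false s i].

Definition atom_of_bits (s : bitseq) : atom :=
  if (count id s == 0)%N then e else if (count id s <= 6)%N then a
  else if zero_coords s \in B2_zero_sets then c else b.

Definition atom_of (x : G) : atom := atom_of_bits (bits x).

Definition atom_class_bits (z : atom) : pred bitseq :=
  fun s => atom_code (atom_of_bits s) == atom_code z.

Lemma wt_bits (x : G) : wt x = count id (bits x).
Proof.
by rewrite /wt /bits count_map enumT cardsE cardE /enum_mem size_filter; apply: eq_count.
Qed.

Lemma atom_of_eq_e (x : G) : (atom_of x == e) = (x == 0).
Proof. by rewrite -count_bits_eq0 /atom_of /atom_of_bits eq_atomE; do !case: ifP. Qed.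

Lemma mem_atom_class_bits (z : atom) (x : G) :
  (x \in atom_class atom_of z) = atom_class_bits z (bits x).
Proof. by rewrite inE eq_atomE. Qed.

Lemma atom_class_sumset_bits (x y : atom) (Z : {set G}) (R : pred bitseq) :
  (forall z, (z \in Z) = R (bits z)) ->
  (let Xs := [seq t <- all_bitseqs 10 | atom_class_bits x t] in
   all (fun s => R s == (find (fun t => atom_class_bits y (bxor s t)) Xs < size Xs)%N)
       (all_bitseqs 10)) ->
  [set u + v | u in atom_class atom_of x, v in atom_class atom_of y] = Z.
Proof. exact: sumset_bits (mem_atom_class_bits x) (mem_atom_class_bits y). Qed.

Lemma atom_class_sumsets :
  let A := atom_class atom_of a in
  let B1 := atom_class atom_of b in let B2 := atom_class atom_of c in
  [set u + v | u in A, v in A] = [set: G] /\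
  [set u + v | u in A, v in B1] = [set: G] :\ 0 /\
  [set u + v | u in A, v in B2] = [set: G] :\ 0 /\
  [set u + v | u in B1, v in B1] = A :|: [set 0] /\
  [set u + v | u in B2, v in B2] = A :|: [set 0] /\
  [set u + v | u in B1, v in B2] = A.
Proof.
have mem_setT (g : G) : (g \in [set: G]) = predT (bits g) by rewrite inE.
have mem_nonzero (g : G) : (g \in [set: G] :\ 0) = predC (atom_class_bits e) (bits g).
  by rewrite !inE andbT -mem_atom_class_bits inE atom_of_eq_e.
have mem_A0 (g : G) : (g \in atom_class atom_of a :|: [set 0]) =
                      predU (atom_class_bits a) (atom_class_bits e) (bits g).
  by rewrite !inE -!mem_atom_class_bits !inE atom_of_eq_e.
split; first by apply: (atom_class_sumset_bits mem_setT); vm_compute.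
split; first by apply: (atom_class_sumset_bits mem_nonzero); vm_compute.
split; first by apply: (atom_class_sumset_bits mem_nonzero); vm_compute.
split; first by apply: (atom_class_sumset_bits mem_A0); vm_compute.
split; first by apply: (atom_class_sumset_bits mem_A0); vm_compute.
by apply: (atom_class_sumset_bits (mem_atom_class_bits a)); vm_compute.
Qed.

Lemma weight_class_a : [set x : G | 1 <= wt x <= 6]%N = atom_class atom_of a.
Proof.
apply/setP => x; rewrite !inE wt_bits /atom_of /atom_of_bits eq_atomE lt0n.
by case: eqP => //= _; do !case: ifP.
Qed.

Lemma weight_class_bc :
  atom_class atom_of b :|: atom_class atom_of c = [set x : G | 7 <= wt x]%N.
Proof.
apply/setP => x; rewrite !inE wt_bits /atom_of /atom_of_bits !eq_atomE.
rewrite ltnNge; case: ifP => [/eqP -> //|_]; case: ifP => // _; by case: ifP.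
Qed.

Local Close Scope ring_scope.

Theorem mainTheorem1 :
  in_Spec_fin 1024 /\
  exists B1 B2 : {set G},
    let A := [set x : G | 1 <= wt x <= 6] in
    [disjoint B1 & B2] /\
    B1 :|: B2 = [set x : G | 7 <= wt x] /\
    sumset A A = [set: G] /\
    sumset A B1 = [set: G] :\ 0%R /\ sumset A B2 = [set: G] :\ 0%R /\
    sumset B1 B1 = A :|: [set 0%R] /\ sumset B2 B2 = A :|: [set 0%R] /\
    sumset B1 B2 = A /\
    exists h : RA -> {set G * G},
      is_representation h /\ forall z : atom, h [set z] = grp_img A B1 B2 z.
Proof.
have [AA [AB1 [AB2 [B1B1 [B2B2 B1B2]]]]] := atom_class_sumsets.
have rep := atom_rel_representation (@addvv 10) atom_of_eq_e AA AB1 AB2 B1B1 B2B2 B1B2.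
split.
  by exists G; split; [rewrite card_mx card_Fp | exists (atom_rel atom_of)].
exists (atom_class atom_of b), (atom_class atom_of c); rewrite /= weight_class_a.
split; first by apply/pred0P => x /=; rewrite !inE; case: eqP => // ->; rewrite eq_atomE.
split; first exact: weight_class_bc.
do 6 (split; first done).
exists (atom_rel atom_of); split => // -[]; apply/setP => p;
  by rewrite !inE // atom_of_eq_e (boolean_addr_eq0 (@addvv 10)).
Qed.
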